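(* Let $\mathcal E$ be an exact category. The assignments $\mathcal S\mapsto \mathsf M_{\mathcal S}:=\{[X]\in\mathsf M(\mathcal E)\mid X\in\mathcal S\}$ and $F\mapsto \mathcal D_F:=\{X\in\mathcal E\mid [X]\in F\}$ are mutually inverse inclusion-preserving bijections between $\operatorname{Serre}(\mathcal E)$ and $\operatorname{Face}(\mathsf M(\mathcal E))$, and $F\mapsto \mathsf M(\mathcal E)\setminus F$ is an inclusion-reversing bijection from $\operatorname{Face}(\mathsf M(\mathcal E))$ to $\operatorname{MSpec}\mathsf M(\mathcal E)$. Hence there are bijections between $\operatorname{Serre}(\mathcal E)$, $\operatorname{Face}(\mathsf M(\mathcal E))$ and $\operatorname{MSpec}\mathsf M(\mathcal E)$.
   Context: All categories are skeletally small and subcategories are full and closed under isomorphisms; $|\mathcal C|$ is the set of isomorphism classes of objects. An exact category $\mathcal E$ is an additive full subcategory of an abelian category $\mathcal A$ closed under extensions; a conflation in $\mathcal E$ is a short exact sequence $0\to X\to Y\to Z\to0$ in $\mathcal A$ with $X,Y,Z\in\mathcal E$. Monoids are commutative, written additively. The Grothendieck monoid $\mathsf M(\mathcal E)$ is a monoid with a map $|\mathcal E|\to\mathsf M(\mathcal E)$, $X\mapsto[X]$, with $[0]=0$ and $[Y]=[X]+[Z]$ for every conflation, universal among such maps to monoids. A Serre subcategory of $\mathcal E$ is an additive subcategory $\mathcal S$ such that for every conflation $0\to X\to Y\to Z\to0$, $Y\in\mathcal S$ iff $X,Z\in\mathcal S$; $\operatorname{Serre}(\mathcal E)$ is the set of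 these. A face of a monoid $M$ is a submonoid $F$ with $x+y\in F$ iff $x\in F$ and $y\in F$; $\operatorname{Face}(M)$ is the set of faces. A prime ideal of $M$ is a subset $\mathfrak p\ne M$ with $x+a\in\mathfrak p$ whenever $x\in\mathfrak p$, $a\in M$, and such that $x+y\in\mathfrak p$ implies $x\in\mathfrak p$ or $y\in\mathfrak p$; $\operatorname{MSpec}M$ is the set of prime ideals. *)

From HB Require Import structures.
From mathcomp Require Import all_boot all_order all_algebra.
Set Implicit Arguments. Unset Strict Implicit. Unset Printing Implicit Defensive.
Import GRing.Theory.
Local Open Scope ring_scope.

Record PreAdd := {
  obj :> Type;
  hom : obj -> obj -> zmodType;
  comp : forall X Y Z : obj, hom Y Z -> hom X Y -> hom X Z;
  idm : forall X : obj, hom X X;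
  comp_assoc : forall (W X Y Z : obj) (h : hom Y Z) (g : hom X Y) (f : hom W X),
      comp h (comp g f) = comp (comp h g) f;
  comp_id_l : forall (X Y : obj) (f : hom X Y), comp (idm Y) f = f;
  comp_id_r : forall (X Y : obj) (f : hom X Y), comp f (idm X) = f;
  comp_addl : forall (X Y Z : obj) (g g' : hom Y Z) (f : hom X Y),
      comp (g + g') f = comp g f + comp g' f;
  comp_addr : forall (X Y Z : obj) (g : hom Y Z) (f f' : hom X Y),
      comp g (f + f') = comp g f + comp g f'
}.
Arguments comp {p X Y Z} g f.
Arguments idm {p} X.

Section CatDefs.
Variable C : PreAdd.

Definition mono (X Y : C) (f : hom X Y) : Prop :=
  forall (W : C) (a b : hom W X), comp f a = comp f b -> a = b.
Definition epi (X Y : C) (g : hom X Y) : Prop :=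
  forall (W : C) (a b : hom Y W), comp a g = comp b g -> a = b.

Definition is_zero_obj (Z : C) : Prop :=
  forall X : C, (forall f g : hom X Z, f = g) /\ (forall f g : hom Z X, f = g).

Definition isom (X Y : C) : Prop :=
  exists (f : hom X Y) (g : hom Y X), comp g f = idm X /\ comp f g = idm Y.

Definition is_kernel (X Y K : C) (f : hom X Y) (k : hom K X) : Prop :=
  comp f k = 0 /\
  forall (W : C) (a : hom W X), comp f a = 0 -> exists! b : hom W K, comp k b = a.

Definition is_cokernel (X Y Q : C) (f : hom X Y) (c : hom Y Q) : Prop :=
  comp c f = 0 /\
  forall (W : C) (a : hom Y W), comp a f = 0 -> exists! b : hom Q W, comp b c = a.

Definition is_biproduct (X Y P : C) (i1 : hom X P) (i2 : hom Y P)
    (p1 : hom P X) (p2 : hom P Y) : Prop :=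
  [/\ comp p1 i1 = idm X, comp p2 i2 = idm Y, comp p2 i1 = 0, comp p1 i2 = 0
    & comp i1 p1 + comp i2 p2 = idm P].

Record abelian : Prop := {
  ab_zero : exists Z : C, is_zero_obj Z;
  ab_biprod : forall X Y : C, exists (P : C) (i1 : hom X P) (i2 : hom Y P)
      (p1 : hom P X) (p2 : hom P Y), is_biproduct i1 i2 p1 p2;
  ab_ker : forall (X Y : C) (f : hom X Y), exists (K : C) (k : hom K X), is_kernel f k;
  ab_coker : forall (X Y : C) (f : hom X Y), exists (Q : C) (c : hom Y Q), is_cokernel f c;
  ab_mono_kernel : forall (X Y : C) (f : hom X Y), mono f ->
      exists (Z : C) (g : hom Y Z), is_kernel g f;
  ab_epi_cokernel : forall (X Y : C) (g : hom X Y), epi g ->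
      exists (W : C) (f : hom W X), is_cokernel f g
}.

Definition short_exact (X Y Z : C) (f : hom X Y) (g : hom Y Z) : Prop :=
  is_kernel g f /\ is_cokernel f g.

Definition additive_subcat (S : C -> Prop) : Prop :=
  [/\ forall X Y : C, S X -> isom X Y -> S Y,
      exists Z : C, is_zero_obj Z /\ S Z
    & forall (X Y P : C) (i1 : hom X P) (i2 : hom Y P) (p1 : hom P X) (p2 : hom P Y),
        is_biproduct i1 i2 p1 p2 -> S X -> S Y -> S P].

Definition exact_cat (E : C -> Prop) : Prop :=
  additive_subcat E /\
  forall (X Y Z : C) (f : hom X Y) (g : hom Y Z),
    short_exact f g -> E X -> E Z -> E Y.

Definition conflation (E : C -> Prop) (X Y Z : C) (f : hom X Y) (g : hom Y Z) : Prop :=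
  [/\ E X, E Y, E Z & short_exact f g].

Definition serre (E S : C -> Prop) : Prop :=
  [/\ forall X : C, S X -> E X,
      additive_subcat S
    & forall (X Y Z : C) (f : hom X Y) (g : hom Y Z),
        conflation E f g -> (S Y <-> S X /\ S Z)].

(* maps |E| -> N (i.e. iso-invariant on E) with [0] = 0 and additive on conflations *)
Definition additive_on (E : C -> Prop) (N : nmodType) (phi : C -> N) : Prop :=
  [/\ forall X Y : C, E X -> isom X Y -> phi X = phi Y,
      forall Z : C, E Z -> is_zero_obj Z -> phi Z = 0
    & forall (X Y Z : C) (f : hom X Y) (g : hom Y Z),
        conflation E f g -> phi Y = phi X + phi Z].

Definition monoid_hom (M N : nmodType) (h : M -> N) : Prop :=
  h 0 = 0 /\ forall a b, h (a + b) = h a + h b.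

Definition groth_monoid (E : C -> Prop) (M : nmodType) (iota : C -> M) : Prop :=
  additive_on E iota /\
  forall (N : nmodType) (phi : C -> N), additive_on E phi ->
    exists h : M -> N, [/\ monoid_hom h,
      (forall X : C, E X -> h (iota X) = phi X)
    & forall h' : M -> N, monoid_hom h' ->
        (forall X : C, E X -> h' (iota X) = phi X) -> forall m, h' m = h m].

Definition M_of (E : C -> Prop) (M : nmodType) (iota : C -> M) (S : C -> Prop) : M -> Prop :=
  fun m => exists X : C, [/\ E X, S X & iota X = m].
Definition D_of (E : C -> Prop) (M : nmodType) (iota : C -> M) (F : M -> Prop) : C -> Prop :=
  fun X => E X /\ F (iota X).

End CatDefs.

Definition face (M : nmodType) (F : M -> Prop) : Prop :=
  F 0 /\ forall x y : M, F (x + y) <-> F x /\ F y.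

Definition prime_ideal (M : nmodType) (p : M -> Prop) : Prop :=
  [/\ exists m : M, ~ p m,
      forall x a : M, p x -> p (x + a)
    & forall x y : M, p (x + y) -> p x \/ p y].

Definition complement (T : Type) (P : T -> Prop) : T -> Prop := fun t => ~ P t.

(* Two facts carry the correspondence. First, [iota] is surjective: its image
   is a submonoid through which the universal map factors, and uniqueness in
   the universal property forces the factored map to be the identity. Second,
   faces of a monoid are exactly the zero sets of monoid maps into the
   two-element monoid ({0, 1}, max), and a Serre subcategory S gives such a map
   on E, namely X |-> [X not in S], which is additive on conflations precisely
   because S is Serre. The face/prime-ideal bijection is plain complementation. *)
From HB Require Import structures.
From mathcomp Require Import all_boot all_order all_algebra boolp.
Set Implicit Arguments. Unset Strict Implicit. Unset Printing Implicit Defensive.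
Import GRing.Theory.
Local Open Scope ring_scope.

Definition bool_or := bool.
HB.instance Definition _ := Choice.on bool_or.
HB.instance Definition _ := GRing.isNmodule.Build bool_or orbA orbC orFb.

Lemma face_zero_set (M : nmodType) (h : M -> bool_or) :
  monoid_hom h -> face (fun m => h m = false).
Proof.
case=> h0 hD; split=> // x y; rewrite hD.
by case: (h x); case: (h y); intuition.
Qed.

Lemma monoid_hom_id (M : nmodType) : monoid_hom (@id M).
Proof. by []. Qed.

Lemma monoid_hom_comp (M N P : nmodType) (g : N -> P) (f : M -> N) :
  monoid_hom g -> monoid_hom f -> monoid_hom (g \o f).
Proof. by case=> g0 gD [f0 fD]; split=> [|a b]; rewrite /= ?f0 ?fD. Qed.

Section Submonoid.
Variables (M : nmodType) (P : pred M).
Hypotheses (P0 : P 0) (PD : forall x y, P x -> P y -> P (x + y)).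

(* The closure proofs are parameters of the type so that its Nmodule instance
   below can be found by unification. *)
Definition submonoid of P 0 & (forall x y, P x -> P y -> P (x + y)) : Type :=
  {m : M | P m}.
HB.instance Definition _ := Choice.copy (submonoid P0 PD) {m : M | P m}.

Definition submonoid0 : submonoid P0 PD := exist _ 0 P0.
Definition submonoid_add (a b : submonoid P0 PD) : submonoid P0 PD :=
  exist _ (val a + val b) (PD (valP a) (valP b)).

Lemma submonoid_addA : associative submonoid_add.
Proof. by move=> a b c; apply: val_inj; rewrite /= addrA. Qed.
Lemma submonoid_addC : commutative submonoid_add.
Proof. by move=> a b; apply: val_inj; rewrite /= addrC. Qed.
Lemma submonoid_add0 : left_id submonoid0 submonoid_add.
Proof. by move=> a; apply: val_inj; rewrite /= add0r. Qed.

HB.instance Definition _ :=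
  GRing.isNmodule.Build (submonoid P0 PD) submonoid_addA submonoid_addC submonoid_add0.

Lemma monoid_hom_val : monoid_hom (val : submonoid P0 PD -> M).
Proof. by []. Qed.
End Submonoid.

Section PrimeIdeals.
Variable M : nmodType.

Lemma complementK (P : M -> Prop) (m : M) : complement (complement P) m <-> P m.
Proof. by rewrite /complement notK. Qed.

Lemma face_complement_prime (F : M -> Prop) : face F -> prime_ideal (complement F).
Proof.
case=> F0 FD; split.
- by exists 0; rewrite /complement notK.
- by move=> x a Fx /FD [].
- by move=> x y; rewrite /complement FD => /not_andP.
Qed.

Lemma prime_complement_face (p : M -> Prop) : prime_ideal p -> face (complement p).
Proof.
case=> -[m0 pm0] p_ideal p_prime; split.
- by move=> p0; apply: pm0; rewrite -(add0r m0); apply: p_ideal.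
- move=> x y; split.
  + by move=> pxy; split=> [px | py]; apply: pxy;
      [| rewrite addrC]; apply: p_ideal.
  + by case=> px py /p_prime [].
Qed.
End PrimeIdeals.

Section PreAddFacts.
Variable C : PreAdd.

Lemma comp0l (X Y Z : C) (f : hom X Y) : comp (0 : hom Y Z) f = 0.
Proof. by apply: (addrI (comp 0 f)); rewrite -comp_addl !addr0. Qed.

Lemma comp0r (X Y Z : C) (g : hom Y Z) : comp g (0 : hom X Y) = 0.
Proof. by apply: (addrI (comp g 0)); rewrite -comp_addr !addr0. Qed.

Lemma biproduct_short_exact (X Y P : C) (i1 : hom X P) (i2 : hom Y P)
    (p1 : hom P X) (p2 : hom P Y) :
  is_biproduct i1 i2 p1 p2 -> short_exact i1 p2.
Proof.
case=> p1i1 p2i2 p2i1 p1i2 split_id; split; split=> // W a a0.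
- exists (comp p1 a); split.
  + have := comp_id_l a.
    by rewrite -split_id comp_addl -!comp_assoc a0 comp0r addr0.
  + by move=> b <-; rewrite comp_assoc p1i1 comp_id_l.
- exists (comp a i2); split.
  + have := comp_id_r a.
    by rewrite -split_id comp_addr !comp_assoc a0 comp0l add0r.
  + by move=> b <-; rewrite -comp_assoc p2i2 comp_id_r.
Qed.

Lemma isom_sym (X Y : C) : isom X Y -> isom Y X.
Proof. by case=> f [g [gf fg]]; exists g, f. Qed.

Lemma zero_obj_isom (X Y : C) : is_zero_obj X -> is_zero_obj Y -> isom X Y.
Proof. by move=> zX zY; exists 0, 0; split; [apply: (zX X).1 | apply: (zY Y).1]. Qed.

Lemma serre_zero_obj (E S : C -> Prop) (Z : C) :
  serre E S -> is_zero_obj Z -> S Z.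
Proof.
by case=> _ [S_iso [Z0 [zZ0 SZ0]] _] _ zZ; apply: S_iso SZ0 (zero_obj_isom zZ0 zZ).
Qed.
End PreAddFacts.

Section GrothendieckMonoid.
Variables (C : PreAdd) (E : C -> Prop) (M : nmodType) (iota : C -> M).
Hypotheses (HC : abelian C) (HE : exact_cat E) (HM : groth_monoid E iota).

Lemma iota_iso (X Y : C) : E X -> isom X Y -> iota X = iota Y.
Proof. by case: HM => -[iso _ _] _; apply: iso. Qed.

Lemma iota_zero (Z : C) : E Z -> is_zero_obj Z -> iota Z = 0.
Proof. by case: HM => -[_ zero _] _; apply: zero. Qed.

Lemma iota_conflation (X Y Z : C) (f : hom X Y) (g : hom Y Z) :
  conflation E f g -> iota Y = iota X + iota Z.
Proof. by case: HM => -[_ _ add] _; apply: add. Qed.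

Lemma additive_on_comp (N : nmodType) (h : M -> N) :
  monoid_hom h -> additive_on E (h \o iota).
Proof.
case=> h0 hD; split=> /=.
- by move=> X Y EX /(iota_iso EX) ->.
- by move=> Z EZ /(iota_zero EZ) ->.
- by move=> X Y Z f g /iota_conflation ->.
Qed.

Lemma groth_monoid_hom_ext (N : nmodType) (h h' : M -> N) :
  monoid_hom h -> monoid_hom h' -> (forall X, E X -> h (iota X) = h' (iota X)) ->
  forall m, h m = h' m.
Proof.
move=> hh hh' eq_hh'; case: HM => _ /(_ _ _ (additive_on_comp hh)).
case=> u [_ _ u_unique] m.
by rewrite (u_unique h hh) // (u_unique h' hh') // => X /eq_hh'.
Qed.

Lemma biproduct_conflation (X Y P : C) (i1 : hom X P) (i2 : hom Y P)
    (p1 : hom P X) (p2 : hom P Y) :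
  is_biproduct i1 i2 p1 p2 -> E X -> E Y -> conflation E i1 p2.
Proof.
move=> bP EX EY; split=> //; last exact: biproduct_short_exact bP.
by case: HE => -[_ _ E_biprod] _; apply: E_biprod bP EX EY.
Qed.

Lemma iota_biproduct (X Y : C) :
  E X -> E Y -> exists P, E P /\ iota P = iota X + iota Y.
Proof.
move=> EX EY; have [P [i1 [i2 [p1 [p2 bP]]]]] := ab_biprod HC X Y.
have cP := biproduct_conflation bP EX EY.
by exists P; split; [case: cP | apply: iota_conflation cP].
Qed.

Definition in_image (m : M) : bool := `[< exists X, E X /\ iota X = m >].

Lemma in_image0 : in_image 0.
Proof.
case: HE => -[_ [Z [zZ EZ]] _] _.
by apply/asboolP; exists Z; split=> //; apply: iota_zero.
Qed.

Lemma in_imageD (x y : M) : in_image x -> in_image y -> in_image (x + y).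
Proof.
move=> /asboolP[X [EX <-]] /asboolP[Y [EY <-]].
by apply/asboolP; apply: iota_biproduct.
Qed.

Lemma iota_surj (m : M) : exists X, E X /\ iota X = m.
Proof.
pose N := submonoid in_image0 in_imageD.
pose phi (X : C) : N := insubd (submonoid0 in_image0 in_imageD) (iota X).
have phiE X : E X -> val (phi X) = iota X.
  by move=> EX; rewrite insubdK //; apply/asboolP; exists X.
have phi_add : additive_on E phi.
  split.
  - by move=> X Y EX iXY; rewrite /phi (iota_iso EX iXY).
  - by move=> Z EZ zZ; apply: val_inj; rewrite phiE // iota_zero.
  - move=> X Y Z f g cfg; case: (cfg) => EX EY EZ _.
    by apply: val_inj; rewrite /= !phiE // (iota_conflation cfg).
case: HM => _ /(_ _ _ phi_add) [h [h_hom h_iota _]].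
have val_h_hom := monoid_hom_comp (monoid_hom_val in_image0 in_imageD) h_hom.
have val_h_id : val (h m) = m.
  apply: (groth_monoid_hom_ext val_h_hom (monoid_hom_id M) _ m) => X EX.
  by rewrite /= h_iota // phiE.
by have /asboolP := valP (h m); rewrite val_h_id.
Qed.

Lemma serre_indicator (S : C -> Prop) : serre E S ->
  exists h : M -> bool_or, monoid_hom h /\
    forall X, E X -> (h (iota X) = false <-> S X).
Proof.
move=> HS; have S_zero Z := serre_zero_obj (Z := Z) HS.
case: HS => _ [S_iso _ _] S_conflation.
pose psi (X : C) : bool_or := ~~ `[< S X >].
have psi_add : additive_on E psi.
  split.
  - move=> X Y _ iXY; congr negb; apply/asboolP/asboolP.
    + by move/S_iso; apply.
    + by move/S_iso; apply; apply: isom_sym.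
  - by move=> Z _ /S_zero SZ; rewrite /psi; case: asboolP.
  - move=> X Y Z f g /S_conflation; rewrite /psi.
    by do 3 case: asboolP; tauto.
case: HM => _ /(_ _ _ psi_add) [h [h_hom h_iota _]].
by exists h; split=> // X EX; rewrite h_iota // /psi; case: asboolP.
Qed.

Lemma M_of_zero_set (S : C -> Prop) (h : M -> bool_or) :
  (forall X, E X -> (h (iota X) = false <-> S X)) ->
  forall m, M_of E iota S m <-> h m = false.
Proof.
move=> hS m; split; first by case=> X [EX SX <-]; apply/hS.
move=> hm; have [X [EX iXm]] := iota_surj m.
by exists X; split=> //; apply/hS; rewrite ?iXm.
Qed.

Lemma serre_M_of_face (S : C -> Prop) : serre E S -> face (M_of E iota S).
Proof.
case/serre_indicator=> h [h_hom hS].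
have [F0 FD] := face_zero_set h_hom.
split=> [|x y]; first by apply/(M_of_zero_set hS).
by rewrite !(M_of_zero_set hS).
Qed.

Lemma face_D_of_serre (F : M -> Prop) : face F -> serre E (D_of E iota F).
Proof.
case=> F0 FD; split; first by move=> X [].
- split.
  + by case: HE => -[E_iso _ _] _ X Y [EX FX] iXY;
      split; [apply: E_iso iXY | rewrite -(iota_iso EX iXY)].
  + case: HE => -[_ [Z [zZ EZ]] _] _.
    by exists Z; split=> //; split; rewrite ?(iota_zero EZ zZ).
  + move=> X Y P i1 i2 p1 p2 bP [EX FX] [EY FY].
    have cP := biproduct_conflation bP EX EY.
    by split; [case: cP | rewrite (iota_conflation cP); apply/FD].
- move=> X Y Z f g cfg; case: (cfg) => EX EY EZ _.
  by rewrite /D_of (iota_conflation cfg) FD; tauto.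
Qed.

Lemma D_of_M_of (S : C -> Prop) : serre E S ->
  forall X, D_of E iota (M_of E iota S) X <-> S X.
Proof.
move=> HS X; have [h [_ hS]] := serre_indicator HS.
split; first by case=> EX /(M_of_zero_set hS) /hS; apply.
move=> SX; have EX : E X by case: HS => S_E _ _; apply: S_E.
by split=> //; exists X.
Qed.

Lemma M_of_D_of (F : M -> Prop) : forall m, M_of E iota (D_of E iota F) m <-> F m.
Proof.
move=> m; split; first by case=> X [_ [_ FX] <-].
move=> Fm; have [X [EX iXm]] := iota_surj m.
by exists X; split=> //; split; rewrite ?iXm.
Qed.
End GrothendieckMonoid.

Theorem mainTheorem2 (C : PreAdd) (HC : abelian C) (E : C -> Prop)
  (HE : exact_cat E) (M : nmodType) (iota : C -> M) (HM : groth_monoid E iota) :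
  (* S |-> M_S and F |-> D_F are well defined *)
  (forall S : C -> Prop, serre E S -> face (M_of E iota S)) /\
  (forall F : M -> Prop, face F -> serre E (D_of E iota F)) /\
  (* mutually inverse *)
  (forall S : C -> Prop, serre E S -> forall X : C, D_of E iota (M_of E iota S) X <-> S X) /\
  (forall F : M -> Prop, face F -> forall m : M, M_of E iota (D_of E iota F) m <-> F m) /\
  (* inclusion preserving *)
  (forall S S' : C -> Prop, serre E S -> serre E S' -> (forall X, S X -> S' X) ->
     forall m, M_of E iota S m -> M_of E iota S' m) /\
  (forall F F' : M -> Prop, face F -> face F' -> (forall m, F m -> F' m) ->
     forall X, D_of E iota F X -> D_of E iota F' X) /\
  (* F |-> M \ F is a bijection Face(M) -> MSpec M *)
  (forall F : M -> Prop, face F -> prime_ideal (complement F)) /\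
  (forall p : M -> Prop, prime_ideal p ->
     exists F : M -> Prop, face F /\ forall m, complement F m <-> p m) /\
  (forall F F' : M -> Prop, face F -> face F' ->
     (forall m, complement F m <-> complement F' m) -> forall m, F m <-> F' m) /\
  (* inclusion reversing *)
  (forall F F' : M -> Prop, face F -> face F' -> (forall m, F m -> F' m) ->
     forall m, complement F' m -> complement F m).
Proof.
split; first exact: serre_M_of_face.
split; first exact: face_D_of_serre.
split; first exact: D_of_M_of.
split; first by move=> F _; apply: M_of_D_of.
split; first by move=> S S' _ _ SS' m [X [EX SX <-]]; exists X; split=> //; apply: SS'.
split; first by move=> F F' _ _ FF' X [EX FX]; split=> //; apply: FF'.
split; first exact: face_complement_prime.
split.
  by move=> p pp; exists (complement p); split;
    [apply: prime_complement_face | apply: complementK].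
split.
  move=> F F' _ _ FF' m; split=> Fm; apply/complementK => nFm.
  - exact: (FF' m).2 nFm Fm.
  - exact: (FF' m).1 nFm Fm.
by move=> F F' _ _ FF' m nF'm Fm; apply/nF'm/FF'.
Qed.
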